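(* Let $\mu\in V_n$ be an associative algebra such that there exists $[\lambda]\in\mathrm{GL}(n).[\mu]$ with $\mathrm M_\lambda$ negative definite. Then $\mu$ is semisimple.
   Context: $V_n$ is the space of bilinear maps $\mu:\mathbb C^n\times\mathbb C^n\to\mathbb C^n$ with $\mathrm{GL}(n)$-action $g.\mu(X,Y)=g\mu(g^{-1}X,g^{-1}Y)$ and the standard Hermitian inner product on $\mathbb C^n$. $L^\lambda_XY=\lambda(X,Y)$, $R^\lambda_XY=\lambda(Y,X)$, and for an orthonormal basis $\{X_i\}$, $\mathrm M_\lambda=2\sum_i L^\lambda_{X_i}(L^\lambda_{X_i})^*-2\sum_i (L^\lambda_{X_i})^*L^\lambda_{X_i}-2\sum_i (R^\lambda_{X_i})^*R^\lambda_{X_i}$. An associative algebra is semisimple if its radical (largest nilpotent ideal) is zero. *)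

From HB Require Import structures.
From mathcomp Require Import all_boot all_order all_algebra.
From mathcomp Require Import reals.
From mathcomp Require Import complex.
Set Implicit Arguments. Unset Strict Implicit. Unset Printing Implicit Defensive.
Import Order.TTheory GRing.Theory Num.Theory.
Local Open Scope ring_scope.
Local Open Scope complex_scope.

(* Vectors of C^n are column vectors 'cV[R[i]]_n, with the standard
   Hermitian inner product <x,y> = x^* ^T y. *)

Section Defs.
Variable R : realType.
Local Notation C := (R[i]).
Variable n : nat.
Local Notation vec := 'cV[C]_n.

Definition bilinear_map (mu : vec -> vec -> vec) : Prop :=
  (forall (a : C) (X X' Y : vec), mu (a *: X + X') Y = a *: mu X Y + mu X' Y) /\
  (forall (a : C) (X Y Y' : vec), mu X (a *: Y + Y') = a *: mu X Y + mu X Y').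

Definition gl_act (g : 'M[C]_n) (mu : vec -> vec -> vec) : vec -> vec -> vec :=
  fun X Y => g *m mu (invmx g *m X) (invmx g *m Y).

Definition adjmx (A : 'M[C]_n) : 'M[C]_n := (map_mx conjc A)^T.

Definition evec (i : 'I_n) : vec := delta_mx i 0.

Definition Lmx (lam : vec -> vec -> vec) (X : vec) : 'M[C]_n :=
  \matrix_(i, j) (lam X (evec j)) i 0.
Definition Rmx (lam : vec -> vec -> vec) (X : vec) : 'M[C]_n :=
  \matrix_(i, j) (lam (evec j) X) i 0.

(* M_lam computed in the orthonormal basis {e_i}. *)
Definition Mmx (lam : vec -> vec -> vec) : 'M[C]_n :=
  2%:R *: (\sum_i Lmx lam (evec i) *m adjmx (Lmx lam (evec i)))
  - 2%:R *: (\sum_i adjmx (Lmx lam (evec i)) *m Lmx lam (evec i))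
  - 2%:R *: (\sum_i adjmx (Rmx lam (evec i)) *m Rmx lam (evec i)).

Definition neg_def (A : 'M[C]_n) : Prop :=
  (adjmx A = A) /\
  (forall x : vec, x != 0 -> ((map_mx conjc x)^T *m A *m x) 0 0 < 0).

Definition associative_alg (mu : vec -> vec -> vec) : Prop :=
  forall X Y Z : vec, mu (mu X Y) Z = mu X (mu Y Z).

Definition is_ideal (mu : vec -> vec -> vec) (I : vec -> Prop) : Prop :=
  [/\ I 0,
      (forall (a : C) (x y : vec), I x -> I y -> I (a *: x + y)),
      (forall x y : vec, I x -> I (mu x y)) &
      (forall x y : vec, I y -> I (mu x y))].

(* I is nilpotent: I^k = 0 for some k, i.e. every product of k elements of I
   vanishes (products taken left-normed: foldl mu x1 [x2;...;xk]). *)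
Definition nilpotent_ideal (mu : vec -> vec -> vec) (I : vec -> Prop) : Prop :=
  is_ideal mu I /\
  exists k : nat, forall (x : vec) (s : seq vec),
    size s = k -> I x -> (forall y, y \in s -> I y) -> foldl mu x s = 0.

(* Semisimple: the radical (largest nilpotent ideal) is zero, i.e. every
   nilpotent ideal is the zero ideal. *)
Definition semisimple (mu : vec -> vec -> vec) : Prop :=
  forall I : vec -> Prop, nilpotent_ideal mu I -> forall x, I x -> x = 0.

End Defs.

(* If mu had a nonzero nilpotent ideal I, the two-sided annihilator of I inside I would
   be a nonzero ideal N with N^2 = 0, and g maps it to an ideal of lam = c g.mu with the
   same property.  For the orthogonal projection P onto g N, with Q = 1 - P and ||.|| the
   Frobenius norm,
     tr(M_lam P) = 2 sum_i ||P L_i||^2 - 2 sum_i ||L_i P||^2 - 2 sum_i ||R_i P||^2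
                 = 2 sum_(i,j) ||P lam(Q e_i, Q e_j)||^2 >= 0,
   since the ideal property kills or cancels every other block of lam; but negative
   definiteness of M_lam forces tr(M_lam P) < 0. *)

From HB Require Import structures.
From mathcomp Require Import all_boot all_order all_algebra.
From mathcomp Require Import reals.
From mathcomp Require Import complex.
From mathcomp Require Import ring.
From Stdlib Require Import Classical.
Set Implicit Arguments. Unset Strict Implicit. Unset Printing Implicit Defensive.
Import Order.TTheory GRing.Theory Num.Theory.
Local Open Scope ring_scope.
Local Open Scope complex_scope.

Section ComplexLinearAlgebra.
Variable R : realType.
Local Notation C := (R[i]).

Definition hadjmx {m p} (A : 'M[C]_(m, p)) : 'M[C]_(p, m) := (map_mx conjc A)^T.

Definition fnorm2 {m p} (A : 'M[C]_(m, p)) : C := \tr (hadjmx A *m A).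

Definition orthoproj {m} (P : 'M[C]_m) := hadjmx P = P /\ P *m P = P.

Lemma hadjmxM m p q (A : 'M[C]_(m, p)) (B : 'M[C]_(p, q)) :
  hadjmx (A *m B) = hadjmx B *m hadjmx A.
Proof. by rewrite /hadjmx map_mxM trmx_mul. Qed.

Lemma hadjmxK m p (A : 'M[C]_(m, p)) : hadjmx (hadjmx A) = A.
Proof. by apply/matrixP=> i j; rewrite !mxE conjcK. Qed.

Lemma hadjmx1B m (E : 'M[C]_m) : hadjmx (1%:M - E) = 1%:M - hadjmx E.
Proof. by rewrite /hadjmx map_mxB map_mx1 linearB /= trmx1. Qed.

Lemma fnorm2E m p (A : 'M[C]_(m, p)) :
  fnorm2 A = \sum_j \sum_i A i j * (A i j)^*%C.
Proof.
apply: eq_bigr => j _; rewrite mxE.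
by apply: eq_bigr => i _; rewrite !mxE mulrC.
Qed.

Lemma fnorm2_ge0 m p (A : 'M[C]_(m, p)) : 0 <= fnorm2 A.
Proof.
by rewrite fnorm2E; do 2!(apply: sumr_ge0 => ? _); apply: mul_conjC_ge0.
Qed.

Lemma fnorm2_eq0 m p (A : 'M[C]_(m, p)) : fnorm2 A = 0 -> A = 0.
Proof.
rewrite fnorm2E => A0; apply/matrixP => i j; rewrite mxE.
have Aj0 : \sum_i A i j * (A i j)^*%C = 0.
  apply: (psumr_eq0P _ A0) => // k _.
  by apply: sumr_ge0 => l _; apply: mul_conjC_ge0.
have Aij0 : A i j * (A i j)^*%C = 0.
  by apply: (psumr_eq0P _ Aj0) => // k _; apply: mul_conjC_ge0.
by apply/eqP; rewrite -mul_conjC_eq0; apply/eqP.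
Qed.

Lemma fnorm2_sum_col m p (X : 'M[C]_(m, p)) :
  fnorm2 X = \sum_j fnorm2 (X *m delta_mx j (0 : 'I_1)).
Proof.
rewrite fnorm2E; apply: eq_bigr => j _; rewrite fnorm2E big_ord1.
by apply: eq_bigr => i _; rewrite -colE !mxE.
Qed.

Lemma fnorm2_mulmx_orthoproj m p (X : 'M[C]_(m, p)) (E : 'M[C]_p) :
  orthoproj E -> fnorm2 (X *m E) = \tr (hadjmx X *m X *m E).
Proof.
case=> Eadj EE; rewrite /fnorm2 hadjmxM Eadj -!mulmxA mxtrace_mulC -!mulmxA EE.
by rewrite mulmxA.
Qed.

Lemma fnorm2_orthoproj_mulmx m p (X : 'M[C]_(m, p)) (E : 'M[C]_m) :
  orthoproj E -> fnorm2 (E *m X) = \tr (X *m hadjmx X *m E).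
Proof.
case=> Eadj EE; rewrite /fnorm2 hadjmxM Eadj -!mulmxA (mulmxA E E) EE.
by rewrite mulmxA mxtrace_mulC mulmxA.
Qed.

Lemma orthoproj1B m (E : 'M[C]_m) : orthoproj E -> orthoproj (1%:M - E).
Proof.
case=> Eadj EE; split; first by rewrite hadjmx1B Eadj.
by rewrite mulmxBl mul1mx mulmxBr mulmx1 EE subrr subr0.
Qed.

Lemma fnorm2_split m p (X : 'M[C]_(m, p)) (E : 'M[C]_p) : orthoproj E ->
  fnorm2 X = fnorm2 (X *m E) + fnorm2 (X *m (1%:M - E)).
Proof.
move=> Eproj; rewrite (fnorm2_mulmx_orthoproj _ Eproj).
rewrite (fnorm2_mulmx_orthoproj _ (orthoproj1B Eproj)) -mxtraceD.
by rewrite -mulmxDr addrC subrK mulmx1.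
Qed.

(* tr(M P) = tr(P^* M P) is the sum of v^* M v over the columns v of P. *)
Lemma mxtrace_neg_def_orthoproj_lt0 n (M P : 'M[C]_n) :
  neg_def M -> orthoproj P -> P != 0 -> \tr (M *m P) < 0.
Proof.
case=> _ Mneg [Padj PP] P0.
have -> : \tr (M *m P) = \sum_k (hadjmx (col k P) *m M *m col k P) 0 0.
  rewrite -{1}PP mulmxA mxtrace_mulC -{1}Padj mulmxA.
  apply: eq_bigr => k _; rewrite !mxE; apply: eq_bigr => j _; rewrite !mxE.
  by congr (_ * _); apply: eq_bigr => l _; rewrite !mxE.
have [k0 Pk0] : exists k, col k P != 0.
  apply/existsP; apply: contraR P0; rewrite negb_exists => /forallP Pcol.
  apply/eqP/matrixP => i j.
  by have /negPn/eqP/matrixP/(_ i 0) := Pcol j; rewrite !mxE.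
rewrite (bigD1 k0) //= -[X in _ < X](addr0 (0 : C)).
apply: ltr_leD; first exact: Mneg.
apply: sumr_le0 => k _.
have [->|Pk] := eqVneq (col k P) 0; last exact: ltW (Mneg _ Pk).
by rewrite mulmx0 mxE.
Qed.

Lemma gram_unitmx n r (Q : 'M[C]_(n, r)) :
  (forall w : 'cV[C]_r, Q *m w = 0 -> w = 0) -> hadjmx Q *m Q \in unitmx.
Proof.
move=> Qinj; set G := hadjmx Q *m Q.
rewrite -row_free_unit -kermx_eq0; apply/eqP/row_matrixP => i.
have /sub_kermxP uG := row_sub i (kermx G); set u := row i _ in uG *.
have : fnorm2 (Q *m hadjmx u) = 0.
  rewrite /fnorm2 hadjmxM hadjmxK mulmxA -(mulmxA u) -/G uG mul0mx.
  exact: mxtrace0.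
move/fnorm2_eq0/Qinj => u0.
by rewrite row0 -[u]hadjmxK u0 /hadjmx map_mx0 trmx0.
Qed.

Lemma colspan_orthoproj n r (Q : 'M[C]_(n, r)) :
  (forall w : 'cV[C]_r, Q *m w = 0 -> w = 0) ->
  exists P : 'M[C]_n, [/\ orthoproj P,
    forall v : 'cV_n, exists w, P *m v = Q *m w &
    forall w : 'cV_r, P *m (Q *m w) = Q *m w].
Proof.
move=> /gram_unitmx Gunit; set G := hadjmx Q *m Q in Gunit.
have Gadj : hadjmx G = G by rewrite /G hadjmxM hadjmxK.
exists (Q *m invmx G *m hadjmx Q); split.
- split.
    rewrite !hadjmxM hadjmxK mulmxA; congr (_ *m _ *m _).
    by rewrite /hadjmx map_invmx trmx_inv -/(hadjmx G) Gadj.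
  rewrite !mulmxA -(mulmxA _ (hadjmx Q) Q) -/G -(mulmxA _ G) mulmxV //.
  by rewrite mulmx1.
- by move=> v; exists (invmx G *m (hadjmx Q *m v)); rewrite !mulmxA.
- by move=> w; rewrite -!mulmxA (mulmxA (hadjmx Q)) -/G mulKmx.
Qed.

Section Subspace.
Variable n : nat.
Local Notation vec := 'cV[C]_n.
Variable N : vec -> Prop.
Hypothesis N0 : N 0.
Hypothesis Nlin : forall a x y, N x -> N y -> N (a *: x + y).

Lemma subspaceZ a x : N x -> N (a *: x).
Proof. by move=> Nx; rewrite -[_ *: _]addr0; apply: Nlin. Qed.

Lemma subspace_sum (I : finType) (f : I -> vec) :
  (forall i, N (f i)) -> N (\sum_i f i).
Proof.
move=> Nf; apply: (big_rec N) => // i u _ Nu.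
by rewrite -[f i]scale1r; apply: Nlin.
Qed.

(* A free family in N has at most n members, so a maximal one exists; it spans N. *)
Lemma subspace_row_basis : exists r (B : 'M[C]_(r, n)),
  [/\ forall i, N (row i B)^T, row_free B & forall v, N v -> (v^T <= B)%MS].
Proof.
pose free_in r (B : 'M[C]_(r, n)) := (forall i, N (row i B)^T) /\ row_free B.
have [r [B [[BN Bfree] Bmax]]] : exists r (B : 'M[C]_(r, n)), free_in r B /\
    forall B' : 'M[C]_(r + 1, n), ~ free_in _ B'.
  apply: NNPP => nomax.
  have all_free r : exists B, free_in r B.
    elim: r => [|r [B BN]]; first by exists 0; split; [case | rewrite /row_free mxrank0].
    rewrite -addn1; apply: NNPP => noB; apply: nomax; exists r, B; split=> // B' B'N.
    by apply: noB; exists B'.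
  have [B [_ Bfree]] := all_free n.+1.
  by move: (rank_leq_col B); rewrite (eqP Bfree) ltnn.
exists r, B; split=> // v Nv; apply: contraT => vB; case: (Bmax (col_mx B v^T)).
split.
  move=> i; rewrite -(splitK i); case: (split i) => k /=.
    by rewrite rowKu.
  by rewrite rowKd ord1 row_id trmxK.
have : (\rank B < \rank (B + v^T))%N.
  by apply: rank_ltmx; rewrite ltmxE addsmxSl addsmx_sub submx_refl.
rewrite (eqP Bfree) addsmxE => rankBv.
by rewrite /row_free eqn_leq rank_leq_row; move: rankBv; rewrite -addn1.
Qed.

Lemma subspace_orthoproj : exists P : 'M[C]_n,
  [/\ orthoproj P, forall v, N (P *m v) & forall v, N v -> P *m v = v].
Proof.
have [r [B [BN Bfree Bspan]]] := subspace_row_basis.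
have NBT w : N (B^T *m w).
  rewrite -[B^T *m w]trmxK trmx_mul trmxK mulmx_sum_row raddf_sum /=.
  by apply: subspace_sum => i; rewrite linearZ /=; apply: subspaceZ.
have BTinj (w : 'cV[C]_r) : B^T *m w = 0 -> w = 0.
  move=> BTw0; have /eqP : w^T *m B = 0 by rewrite -[B]trmxK -trmx_mul BTw0 trmx0.
  by rewrite (mulmx_free_eq0 _ Bfree) -trmx0 => /eqP /trmx_inj.
have [P [Pproj Prange Pfix]] := colspan_orthoproj BTinj.
exists P; split=> // [v|v /Bspan /submxP [D vD]].
  by have [w ->] := Prange v.
by rewrite -[v]trmxK vD trmx_mul Pfix.
Qed.

End Subspace.

Definition square_zero_ideal n (mu : 'cV[C]_n -> 'cV[C]_n -> 'cV[C]_n)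
    (J : 'cV[C]_n -> Prop) :=
  is_ideal mu J /\ forall x y, J x -> J y -> mu x y = 0.

Section Bilinear.
Variable n : nat.
Local Notation vec := 'cV[C]_n.
Local Notation e := (evec R).
Variable lam : vec -> vec -> vec.
Hypothesis lam_bilin : bilinear_map lam.

Lemma bilinDl x y z : lam (y + z) x = lam y x + lam z x.
Proof. by have := lam_bilin.1 1 y z x; rewrite !scale1r. Qed.

Lemma bilinDr x y z : lam x (y + z) = lam x y + lam x z.
Proof. by have := lam_bilin.2 1 x y z; rewrite !scale1r. Qed.

Lemma bilin0l x : lam 0 x = 0.
Proof. by apply: (addrI (lam 0 x)); rewrite -bilinDl !addr0. Qed.

Lemma bilin0r x : lam x 0 = 0.
Proof. by apply: (addrI (lam x 0)); rewrite -bilinDr !addr0. Qed.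

Lemma bilinZl x a y : lam (a *: y) x = a *: lam y x.
Proof. by have := lam_bilin.1 a y 0 x; rewrite !addr0 bilin0l addr0. Qed.

Lemma bilinZr x a y : lam x (a *: y) = a *: lam x y.
Proof. by have := lam_bilin.2 a x y 0; rewrite !addr0 bilin0r addr0. Qed.

Lemma cV_sum_evec (y : vec) : y = \sum_j y j 0 *: e j.
Proof.
apply/matrixP => i k; rewrite summxE (bigD1 i) //= big1 ?addr0.
  by rewrite !mxE !ord1 !eqxx mulr1.
by move=> j ji; rewrite !mxE eq_sym (negbTE ji) mulr0.
Qed.

Lemma mul_Lmx x y : Lmx lam x *m y = lam x y.
Proof.
have lam_sum (a : 'I_n -> C) : lam x (\sum_j a j *: e j) = \sum_j a j *: lam x (e j).
  apply: (big_rec2 (fun u v => lam x u = v)); first exact: bilin0r.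
  by move=> j u v _ <-; rewrite bilinDr bilinZr.
rewrite {2}(cV_sum_evec y) lam_sum; apply/matrixP => i k.
by rewrite !mxE summxE; apply: eq_bigr => j _; rewrite !mxE !ord1 mulrC.
Qed.

Lemma mul_Rmx x y : Rmx lam y *m x = lam x y.
Proof.
have lam_sum (a : 'I_n -> C) : lam (\sum_j a j *: e j) y = \sum_j a j *: lam (e j) y.
  apply: (big_rec2 (fun u v => lam u y = v)); first exact: bilin0l.
  by move=> j u v _ <-; rewrite bilinDl bilinZl.
rewrite {2}(cV_sum_evec x) lam_sum; apply/matrixP => i k.
by rewrite !mxE summxE; apply: eq_bigr => j _; rewrite !mxE !ord1 mulrC.
Qed.

Definition bnorm2 (A B D : 'M[C]_n) : C :=
  \sum_i \sum_j fnorm2 (D *m lam (A *m e i) (B *m e j)).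

Lemma bnorm2_ge0 A B D : 0 <= bnorm2 A B D.
Proof. by do 2!(apply: sumr_ge0 => ? _); apply: fnorm2_ge0. Qed.

Lemma bnorm2_Lmx A B D :
  \sum_i fnorm2 (D *m Lmx lam (A *m e i) *m B) = bnorm2 A B D.
Proof.
apply: eq_bigr => i _; rewrite fnorm2_sum_col; apply: eq_bigr => j _.
by rewrite -!mulmxA mul_Lmx.
Qed.

Lemma bnorm2_Rmx A B D :
  \sum_j fnorm2 (D *m Rmx lam (B *m e j) *m A) = bnorm2 A B D.
Proof.
rewrite /bnorm2 [in RHS]exchange_big; apply: eq_bigr => j _; rewrite fnorm2_sum_col.
by apply: eq_bigr => i _; rewrite -!mulmxA mul_Rmx.
Qed.

Lemma bnorm2_splitl A B D E : orthoproj E ->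
  bnorm2 A B D = bnorm2 (A *m E) B D + bnorm2 (A *m (1%:M - E)) B D.
Proof.
move=> Eproj; rewrite -!bnorm2_Rmx -big_split; apply: eq_bigr => j _.
by rewrite (fnorm2_split _ Eproj) !mulmxA.
Qed.

Lemma bnorm2_splitr A B D E : orthoproj E ->
  bnorm2 A B D = bnorm2 A (B *m E) D + bnorm2 A (B *m (1%:M - E)) D.
Proof.
move=> Eproj; rewrite -!bnorm2_Lmx -big_split; apply: eq_bigr => i _.
by rewrite (fnorm2_split _ Eproj) !mulmxA.
Qed.

Lemma mxtrace_MmxE P : orthoproj P ->
  \tr (Mmx lam *m P) =
    2%:R * (bnorm2 1%:M 1%:M P - bnorm2 1%:M P 1%:M - bnorm2 P 1%:M 1%:M).
Proof.
move=> Pproj.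
have trE (A : 'I_n -> 'M[C]_n) : \tr ((\sum_i A i) *m P) = \sum_i \tr (A i *m P).
  by rewrite mulmx_suml raddf_sum.
have trLLadj :
    \sum_i \tr (Lmx lam (e i) *m adjmx (Lmx lam (e i)) *m P) = bnorm2 1%:M 1%:M P.
  rewrite -bnorm2_Lmx; apply: eq_bigr => i _.
  by rewrite mul1mx mulmx1 (fnorm2_orthoproj_mulmx _ Pproj).
have trLadjL :
    \sum_i \tr (adjmx (Lmx lam (e i)) *m Lmx lam (e i) *m P) = bnorm2 1%:M P 1%:M.
  rewrite -bnorm2_Lmx; apply: eq_bigr => i _.
  by rewrite !mul1mx (fnorm2_mulmx_orthoproj _ Pproj).
have trRadjR :
    \sum_i \tr (adjmx (Rmx lam (e i)) *m Rmx lam (e i) *m P) = bnorm2 P 1%:M 1%:M.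
  rewrite -bnorm2_Rmx; apply: eq_bigr => i _.
  by rewrite !mul1mx (fnorm2_mulmx_orthoproj _ Pproj).
rewrite /Mmx !mulmxBl -!scalemxAl !mxtraceD -!scaleNr !mxtraceZ !trE.
by rewrite trLLadj trLadjL trRadjR; ring.
Qed.

Lemma mxtrace_Mmx_orthoproj_ge0 (N : vec -> Prop) P :
  square_zero_ideal lam N -> orthoproj P ->
  (forall v, N (P *m v)) -> (forall v, N v -> P *m v = v) ->
  0 <= \tr (Mmx lam *m P).
Proof.
move=> [[_ _ NlamL NlamR] Nsq] Pproj NP PN.
have PlamL x y : P *m lam x (P *m y) = lam x (P *m y) by apply/PN/NlamR.
have PlamR x y : P *m lam (P *m x) y = lam (P *m x) y by apply/PN/NlamL.
have lamP x y : lam (P *m x) (P *m y) = 0 by apply: Nsq.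
have normPL : bnorm2 1%:M 1%:M P = bnorm2 1%:M P 1%:M +
     (bnorm2 P (1%:M - P) 1%:M + bnorm2 (1%:M - P) (1%:M - P) P).
  rewrite (bnorm2_splitr _ _ _ Pproj) !mul1mx; congr (_ + _).
    by apply: eq_bigr => i _; apply: eq_bigr => j _; rewrite PlamL !mul1mx.
  rewrite (bnorm2_splitl _ _ _ Pproj) !mul1mx; congr (_ + _).
  by apply: eq_bigr => i _; apply: eq_bigr => j _; rewrite PlamR !mul1mx.
have normRP : bnorm2 P 1%:M 1%:M = bnorm2 P (1%:M - P) 1%:M.
  rewrite (bnorm2_splitr _ _ _ Pproj) !mul1mx [bnorm2 P P _]big1 ?add0r // => i _.
  by apply: big1 => j _; rewrite lamP mulmx0 /fnorm2 mulmx0 mxtrace0.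
rewrite (mxtrace_MmxE Pproj) normPL normRP.
have -> : forall a b c : C, 2%:R * (a + (b + c) - a - b) = 2%:R * c.
  by move=> a b c; ring.
by rewrite mulr_ge0 ?ler0n ?bnorm2_ge0.
Qed.

Lemma neg_def_Mmx_square_zero_ideal (N : vec -> Prop) :
  neg_def (Mmx lam) -> square_zero_ideal lam N -> forall v, N v -> v = 0.
Proof.
move=> Mneg Nsqz v Nv; have [[N0 Nlin _ _] _] := Nsqz.
have [P [Pproj NP PN]] := subspace_orthoproj N0 Nlin.
apply/eqP; apply: contraT => v_neq0.
have P_neq0 : P != 0.
  by apply: contraNneq v_neq0 => P0; rewrite -(PN _ Nv) P0 mul0mx.
have := lt_le_trans (mxtrace_neg_def_orthoproj_lt0 Mneg Pproj P_neq0)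
  (mxtrace_Mmx_orthoproj_ge0 Nsqz Pproj NP PN).
by rewrite ltxx.
Qed.

End Bilinear.

Lemma bilinear_scale_gl_act n (mu lam : 'cV[C]_n -> 'cV[C]_n -> 'cV[C]_n)
    (g : 'M[C]_n) (c : C) :
  bilinear_map mu -> (forall X Y, lam X Y = c *: gl_act g mu X Y) ->
  bilinear_map lam.
Proof.
move=> mu_bilin lamE; split=> a X X' Y; rewrite !lamE /gl_act !mulmxDr -!scalemxAr.
  rewrite (bilinDl mu_bilin) (bilinZl mu_bilin).
  by rewrite mulmxDr -scalemxAr scalerDr !scalerA mulrC.
rewrite (bilinDr mu_bilin) (bilinZr mu_bilin).
by rewrite mulmxDr -scalemxAr scalerDr !scalerA mulrC.
Qed.

Lemma gl_act_square_zero_ideal n (mu lam : 'cV[C]_n -> 'cV[C]_n -> 'cV[C]_n)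
    (g : 'M[C]_n) (c : C) (J : 'cV[C]_n -> Prop) :
  g \in unitmx -> (forall X Y, lam X Y = c *: gl_act g mu X Y) ->
  square_zero_ideal mu J -> square_zero_ideal lam (fun v => J (invmx g *m v)).
Proof.
move=> g_unit lamE [[J0 Jlin JmuL JmuR] Jsq].
have gact_mu x y : invmx g *m lam x y = c *: mu (invmx g *m x) (invmx g *m y).
  by rewrite lamE /gl_act -scalemxAr mulKmx.
split; first split=> [|a x y Jx Jy|x y Jx|x y Jy].
- by rewrite mulmx0.
- by rewrite mulmxDr -scalemxAr; apply: Jlin.
- by rewrite gact_mu; apply/(subspaceZ J0 Jlin)/JmuL.
- by rewrite gact_mu; apply/(subspaceZ J0 Jlin)/JmuR.
by move=> x y Jx Jy; rewrite lamE /gl_act Jsq // mulmx0 scaler0.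
Qed.

Section Annihilator.
Variable n : nat.
Local Notation vec := 'cV[C]_n.
Variable mu : vec -> vec -> vec.
Hypothesis mu_bilin : bilinear_map mu.
Hypothesis mu_assoc : associative_alg mu.
Variable I : vec -> Prop.
Hypothesis I_ideal : is_ideal mu I.

Definition ideal_ann (t : vec) := I t /\ forall y, I y -> mu t y = 0 /\ mu y t = 0.

Lemma ideal_ann_square_zero : square_zero_ideal mu ideal_ann.
Proof.
have [I0 Ilin ImuL ImuR] := I_ideal.
split=> [|x y [Ix _] [_ yI]]; last exact: (yI x Ix).2.
split=> [|a t u [It tI] [Iu uI]|t a [It tI]|a t [It tI]].
- by split=> // y _; rewrite (bilin0l mu_bilin) (bilin0r mu_bilin).
- split=> [|y Iy]; first exact: Ilin.
  have [ty yt] := tI y Iy; have [uy yu] := uI y Iy.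
  rewrite (bilinDl mu_bilin) (bilinZl mu_bilin) (bilinDr mu_bilin).
  by rewrite (bilinZr mu_bilin) ty yt uy yu scaler0 addr0.
- split=> [|y Iy]; first exact: ImuL.
  by rewrite mu_assoc (tI _ (ImuR a _ Iy)).1 -mu_assoc (tI y Iy).2 (bilin0l mu_bilin).
- split=> [|y Iy]; first exact: ImuR.
  by rewrite mu_assoc (tI y Iy).1 (bilin0r mu_bilin) -mu_assoc (tI _ (ImuL y a Iy)).2.
Qed.

Lemma foldl_ideal x s : I x -> (forall y, y \in s -> I y) -> I (foldl mu x s).
Proof.
have [_ _ ImuL _] := I_ideal.
elim: s x => [//|a s IHs] x Ix Is /=.
by apply: IHs => [|y ys]; [apply: ImuL | apply: Is; rewrite inE ys orbT].
Qed.

Lemma mul_foldl y x s : mu y (foldl mu x s) = foldl mu (mu y x) s.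
Proof. by elim: s x => [//|a s IHs] x /=; rewrite IHs mu_assoc. Qed.

(* If all products of length k.+1 vanish, any nonzero product of length k annihilates
   I on both sides; decrease k until such a product exists. *)
Lemma nilpotent_ideal_ann_neq0 x : nilpotent_ideal mu I -> I x -> x != 0 ->
  exists2 p, p != 0 & ideal_ann p.
Proof.
move=> [_ [k Ik0]] Ix x_neq0; elim: k Ik0 => [|k IHk] Ik0.
  by move: x_neq0; rewrite -[x]/(foldl mu x [::]) Ik0 ?eqxx.
have [[t [s [sk It Is ts_neq0]]]|] := classic (exists t (s : seq vec),
    [/\ size s = k, I t, forall y, y \in s -> I y & foldl mu t s != 0]).
  exists (foldl mu t s) => //; split=> [|y Iy]; first exact: foldl_ideal.
  split.
    rewrite -foldl_rcons; apply: Ik0 => [|//|z]; first by rewrite size_rcons sk.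
    by rewrite mem_rcons inE => /predU1P [->|/Is].
  rewrite mul_foldl; apply: (Ik0 y (t :: s)) => [|//|z]; first by rewrite /= sk.
  by rewrite inE => /predU1P [->|/Is].
move=> no_long; apply: IHk => t s sk It Is.
by apply: NNPP => /eqP ts_neq0; apply: no_long; exists t, s.
Qed.

End Annihilator.

End ComplexLinearAlgebra.

Theorem mainTheorem12 (R : realType) (n : nat)
  (mu : 'cV[R[i]]_n -> 'cV[R[i]]_n -> 'cV[R[i]]_n) :
  bilinear_map mu -> associative_alg mu ->
  (exists (lam : 'cV[R[i]]_n -> 'cV[R[i]]_n -> 'cV[R[i]]_n)
          (g : 'M[R[i]]_n) (c : R[i]),
      [/\ g \in unitmx, c != 0,
          (forall X Y, lam X Y = c *: gl_act g mu X Y) &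
          neg_def (Mmx lam)]) ->
  semisimple mu.
Proof.
move=> mu_bilin mu_assoc [lam [g [c [g_unit _ lamE Mneg]]]] I I_nil x Ix.
have [//|x_neq0] := eqVneq x 0.
have [p p_neq0 p_ann] := nilpotent_ideal_ann_neq0 mu_assoc I_nil.1 I_nil Ix x_neq0.
have ann_sqz := ideal_ann_square_zero mu_bilin mu_assoc I_nil.1.
have gp0 : g *m p = 0.
  apply: (neg_def_Mmx_square_zero_ideal (bilinear_scale_gl_act mu_bilin lamE) Mneg
    (gl_act_square_zero_ideal g_unit lamE ann_sqz)).
  by rewrite mulKmx.
by move: p_neq0; rewrite -(mulKmx g_unit p) gp0 mulmx0 eqxx.
Qed.
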